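(* Let $n\ge 1$ and $m\ge 2$ be integers with $m\nmid n$, and let $\ell=\lfloor n/m\rfloor$. Then the algebraic degree of $\theta_{m,k}$ is $(m-1)k+1$ for every $1\le k\le \ell$. In particular, the maps $\theta_{m,0},\theta_{m,1},\dots,\theta_{m,\ell}$ are linearly independent over $\mathbb{F}_2$ (as elements of the $\mathbb{F}_2$-vector space of all maps $\mathbb{F}_2^n\to\mathbb{F}_2^n$ under pointwise addition), and hence $\Theta_{n,m}=\{\sum_{k=0}^{\ell}a_k\theta_{m,k}: a_k\in\mathbb{F}_2\}$ is an $\mathbb{F}_2$-vector space of dimension $\ell+1$.
   Context: For $x=(x_0,\dots,x_{n-1})\in\mathbb{F}_2^n$, indices of coordinates are taken modulo $n$. For a nonnegative integer $k$, the map $\theta_{m,k}\colon\mathbb{F}_2^n\to\mathbb{F}_2^n$ is defined by $\theta_{m,k}(x)=y$ with $y_i=x_{i+mk}\prod_{1\le j\le mk-1,\ m\nmid j}(x_{i+j}+1)$ for $i\in\{0,\dots,n-1\}$ (for $k=0$ the empty product is $1$, so $\theta_{m,0}$ is the identity map). The algebraic degree of a map $\mathbb{F}_2^n\to\mathbb{F}_2^n$ is the maximum of the degrees of the algebraic normal forms of its coordinate functions. *)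

From HB Require Import structures.
From mathcomp Require Import all_boot all_order all_algebra.
Set Implicit Arguments. Unset Strict Implicit. Unset Printing Implicit Defensive.
Import GRing.Theory.
Local Open Scope ring_scope.

Notation F2 := 'F_2.
Notation BV n := 'rV[F2]_n.

(* x_k with index k taken modulo n (n >= 1 in all uses; 0 if n = 0). *)
Definition coord (n : nat) (x : BV n) (k : nat) : F2 :=
  odflt 0 (omap (x ord0) (insub (k %% n)%N : option 'I_n)).

Definition theta (n m k : nat) (x : BV n) : BV n :=
  \row_(i < n) (coord x (i + m * k)%N *
     \prod_(1 <= j < m * k | ~~ (m %| j)%N) (coord x (i + j)%N + 1)).

(* Algebraic normal form of a Boolean function f : F_2^n -> F_2:
   f(x) = sum_{S subset [n]} a_S prod_{i in S} x_i, with the coefficients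
   given by the Moebius transform a_S = sum_{supp(x) subset S} f(x). *)
Definition supp (n : nat) (x : BV n) : {set 'I_n} := [set i | x ord0 i != 0].

Definition anf_coef (n : nat) (f : BV n -> F2) (S : {set 'I_n}) : F2 :=
  \sum_(x : BV n | supp x \subset S) f x.

(* degree of the ANF of f (0 for the zero function) *)
Definition anf_deg (n : nat) (f : BV n -> F2) : nat :=
  \max_(S : {set 'I_n} | anf_coef f S != 0) #|S|.

Definition alg_deg (n : nat) (F : BV n -> BV n) : nat :=
  \max_(i < n) anf_deg (fun x => F x ord0 i).

Definition Theta (n m : nat) : {vspace {ffun BV n -> BV n}} :=
  <<[seq [ffun x => theta m k x] | k <- iota 0 (n %/ m).+1]>>%VS.

From Pilot Require Import Defs.
From HB Require Import structures.
From mathcomp Require Import all_boot all_order all_algebra zify.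
Import GRing.Theory.
Local Open Scope ring_scope.
Set Implicit Arguments. Unset Strict Implicit. Unset Printing Implicit Defensive.

(* Coordinate i of theta_{m,k} is x_a * prod_{b in B} (x_b + 1) with a = i + mk
   and B = {i + j | j < mk, m does not divide j} (mod n); since mk < n these
   (m-1)k + 1 indices are distinct.  For such a function the Moebius coefficient
   on S vanishes unless S is contained in a :|: B (flipping a coordinate outside
   a :|: B does not change the function), while on a :|: B only the unit vector
   e_a contributes, so the ANF degree is |B| + 1.  Linear independence follows
   by evaluation: theta_{m,j}(e_{i+mk})_i = [j = k] for j, k <= n/m. *)

Lemma F2_cases (y : F2) : y = 0 \/ y = 1.
Proof. case: y => [[|[|//]]] /= Hy; [left|right]; exact/val_inj. Qed.

Lemma F2_addrr (y : F2) : y + y = 0.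
Proof. exact: (addrr_pchar2 (pchar_Fp (isT : prime 2))). Qed.

Lemma F2_addr1_neq0 (y : F2) : (y + 1 != 0) = (y == 0).
Proof. by case: (F2_cases y) => ->. Qed.

Section AnfPattern.
Variable N : nat.
Implicit Types (x : BV N) (f : BV N -> F2) (S : {set 'I_N}).

Lemma addr_delta_mxE x c j :
  (x + delta_mx ord0 c) ord0 j = x ord0 j + (j == c)%:R.
Proof. by rewrite !mxE eqxx. Qed.

Lemma BV_addrr (y : BV N) : y + y = 0.
Proof. by apply/matrixP => i j; rewrite !mxE F2_addrr. Qed.

Lemma supp_addr_delta_subset S c x : c \in S ->
  (supp (x + delta_mx ord0 c) \subset S) = (supp x \subset S).
Proof.
move=> cS.
suff supp_sub y : supp y \subset S -> supp (y + delta_mx ord0 c) \subset S.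
  apply/idP/idP => [|/supp_sub //].
  by move=> /supp_sub; rewrite -addrA BV_addrr addr0.
move=> /subsetP yS; apply/subsetP => j; rewrite inE addr_delta_mxE.
by case: (eqVneq j c) => [-> //|_]; rewrite addr0 => yj; apply: yS; rewrite inE.
Qed.

(* x and x + e_c are both counted and cancel in characteristic 2. *)
Lemma anf_coef_flip_invariant f S c : c \in S ->
  (forall x, f (x + delta_mx ord0 c) = f x) -> anf_coef f S = 0.
Proof.
move=> cS f_inv; rewrite /anf_coef (bigID (fun x => x ord0 c == 0)) /=.
rewrite [X in _ + X](reindex_inj (addIr (delta_mx ord0 c))) /=.
under [X in _ + X]eq_bigl => x do
  rewrite supp_addr_delta_subset // addr_delta_mxE eqxx F2_addr1_neq0.
under [X in _ + X]eq_bigr => x _ do rewrite f_inv.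
exact: F2_addrr.
Qed.

Definition pattern (a : 'I_N) (B : {set 'I_N}) x : F2 :=
  x ord0 a * \prod_(b in B) (x ord0 b + 1).

Variables (a : 'I_N) (B : {set 'I_N}).

Lemma pattern_addr_delta x c : c \notin a |: B ->
  pattern a B (x + delta_mx ord0 c) = pattern a B x.
Proof.
move=> caB.
have ca : (a == c) = false by apply: contraNF caB => /eqP <-; rewrite setU11.
rewrite /pattern addr_delta_mxE ca addr0; congr (_ * _); apply: eq_bigr => b bB.
rewrite addr_delta_mxE.
have -> : (b == c) = false by apply: contraNF caB => /eqP <-; rewrite setU1r.
by rewrite addr0.
Qed.

Lemma anf_coef_pattern_subset S : anf_coef (pattern a B) S != 0 -> S \subset a |: B.
Proof.
move=> coef_neq0; apply/subsetP => c cS; apply: contraR coef_neq0 => caB.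
by apply/eqP/(anf_coef_flip_invariant cS) => x; exact: pattern_addr_delta.
Qed.

Hypothesis aB : a \notin B.

Lemma pattern_delta c : pattern a B (delta_mx ord0 c) = (a == c)%:R.
Proof.
rewrite /pattern mxE eqxx /=; case: (eqVneq a c) => [<-|]; last by rewrite mul0r.
rewrite mul1r big1 // => b bB; rewrite mxE /=.
have -> : (b == a) = false by apply: contraNF aB => /eqP <-.
by rewrite add0r.
Qed.

Lemma pattern_neq0 x : pattern a B x != 0 ->
  x ord0 a = 1 /\ {in B, forall b, x ord0 b = 0}.
Proof.
rewrite /pattern mulf_eq0 negb_or prodf_seq_eq0 => /andP[xa /hasPn xB].
split=> [|b bB]; first by case: (F2_cases (x ord0 a)) xa => ->.
by have := xB b (mem_index_enum b); rewrite bB /= F2_addr1_neq0 => /eqP.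
Qed.

Lemma supp_delta_mx c : supp (delta_mx ord0 c : BV N) = [set c].
Proof. by apply/setP => j; rewrite !inE mxE eqxx /=; case: (j == c). Qed.

Lemma anf_coef_pattern_top : anf_coef (pattern a B) (a |: B) = 1.
Proof.
rewrite /anf_coef (bigD1 (delta_mx ord0 a)) /=; last first.
  by rewrite supp_delta_mx sub1set setU11.
rewrite pattern_delta eqxx big1 ?addr0 // => x /andP[/subsetP xS x_neq].
apply/eqP; apply: contraR x_neq => /pattern_neq0[xa xB].
apply/eqP/matrixP => i j; rewrite ord1 mxE eqxx /=.
case: (eqVneq j a) => [->|ja] //=.
have [jB|jNB] := boolP (j \in B); first exact: xB.
apply/eqP; apply: contraR jNB => xj.
have /setU1P[ja'|//] : j \in a |: B by apply: xS; rewrite inE.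
by rewrite ja' eqxx in ja.
Qed.

Lemma anf_deg_pattern : anf_deg (pattern a B) = #|B|.+1.
Proof.
apply/eqP; rewrite eqn_leq; apply/andP; split.
  apply/bigmax_leqP => S /anf_coef_pattern_subset/subset_leq_card.
  by rewrite cardsU1 aB.
have := cardsU1 a B; rewrite aB add1n => <-.
by apply: leq_bigmax_cond; rewrite anf_coef_pattern_top oner_neq0.
Qed.

End AnfPattern.

Lemma eq_anf_deg N (f g : BV N -> F2) : f =1 g -> anf_deg f = anf_deg g.
Proof.
move=> fg; apply: eq_bigl => S.
by rewrite /anf_coef (eq_bigr _ (fun x _ => fg x)).
Qed.

Lemma sum_nat_ndvd (m k : nat) : (0 < m)%N ->
  (\sum_(0 <= j < m * k | ~~ (m %| j)) 1 = (m - 1) * k)%N.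
Proof.
move=> m_gt0; elim: k => [|k IH]; first by rewrite !muln0 big_geq.
rewrite mulnS addnC (@big_cat_nat _ _ _ (m * k)) ?leq_addr //= IH.
rewrite big_ltn_cond; last by rewrite -{1}[(m * k)%N]addn0 ltn_add2l.
rewrite dvdn_mulr // big_nat_cond.
rewrite (eq_bigl (fun j => (m * k < j < m * k + m)%N && true)); last first.
  move=> j /=; rewrite andbT; apply/andb_idr => /andP[lo hi].
  rewrite -(subnKC (ltnW lo)) dvdn_addr ?dvdn_mulr //.
  by apply/negP => /dvdn_leq; lia.
by rewrite -big_nat_cond sum_nat_const_nat /=; lia.
Qed.

Lemma card_ord_ndvd (m k : nat) : (0 < m)%N ->
  #|[pred j : 'I_(m * k) | ~~ (m %| j)%N]| = ((m - 1) * k)%N.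
Proof.
move=> m_gt0; rewrite -sum1_card -(sum_nat_ndvd k m_gt0) big_mkord.
by apply: eq_bigl => j; rewrite inE.
Qed.

Section ThetaCoordinates.
Variables (n m : nat) (n_gt0 : (0 < n)%N) (m_gt0 : (0 < m)%N).

Definition ordmod (t : nat) : 'I_n := Ordinal (ltn_pmod t n_gt0).

Lemma coordE (x : BV n) t : Defs.coord x t = x ord0 (ordmod t).
Proof. by rewrite /Defs.coord (insubT (fun j => j < n)%N (ltn_pmod t n_gt0)). Qed.

Lemma ordmod_addl_inj (i : 'I_n) s t : (s < n)%N -> (t < n)%N ->
  ordmod (i + s) = ordmod (i + t) -> s = t.
Proof.
by move=> sn tn /(congr1 val) /= /eqP; rewrite eqn_modDl !modn_small // => /eqP.
Qed.

Definition theta_guard (i : 'I_n) k : {set 'I_n} :=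
  [set ordmod (i + j) | j : 'I_(m * k) in [pred j : 'I_(m * k) | ~~ (m %| j)%N]].

Variables (k : nat) (mk_lt_n : (m * k < n)%N) (i : 'I_n).

Lemma theta_guard_inj :
  {in [pred j : 'I_(m * k) | ~~ (m %| j)%N] &,
    injective (fun j : 'I_(m * k) => ordmod (i + j))}.
Proof.
move=> j1 j2 _ _ /ordmod_addl_inj j12; apply/val_inj/j12.
  exact: ltn_trans (ltn_ord j1) mk_lt_n.
exact: ltn_trans (ltn_ord j2) mk_lt_n.
Qed.

Lemma card_theta_guard : #|theta_guard i k| = ((m - 1) * k)%N.
Proof. by rewrite card_in_imset ?card_ord_ndvd //; exact: theta_guard_inj. Qed.

Lemma theta_head_notin_guard : ordmod (i + m * k) \notin theta_guard i k.
Proof.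
apply/imsetP => -[j _ /ordmod_addl_inj].
move=> /(_ mk_lt_n (ltn_trans (ltn_ord j) mk_lt_n)) mkj.
by have := ltn_ord j; lia.
Qed.

(* [theta_guard] starts at j = 0 rather than 1: harmless, as m divides 0. *)
Lemma theta_coordE (x : BV n) :
  theta m k x ord0 i = pattern (ordmod (i + m * k)) (theta_guard i k) x.
Proof.
rewrite mxE coordE /pattern big_imset /=; last exact: theta_guard_inj.
congr (_ * _).
rewrite [RHS](eq_bigl (fun j : 'I_(m * k) => ~~ (m %| j)%N)) => [|j]; last first.
  by rewrite inE.
rewrite -(big_mkord (fun j => ~~ (m %| j)%N)
                    (fun j => x ord0 (ordmod (i + j)) + 1)).
case: (posnP (m * k)) => [->|mk_gt0]; first by rewrite !big_geq.
rewrite [in RHS]big_ltn_cond // dvdn0.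
by apply: eq_bigr => j _; rewrite coordE.
Qed.

Lemma anf_deg_theta : anf_deg (fun x => theta m k x ord0 i) = ((m - 1) * k).+1.
Proof.
rewrite (eq_anf_deg theta_coordE) anf_deg_pattern ?card_theta_guard //.
exact: theta_head_notin_guard.
Qed.
End ThetaCoordinates.

Section ThetaFamily.
Variables (n m : nat) (n_gt0 : (0 < n)%N) (m_gt0 : (0 < m)%N).

Lemma alg_deg_theta k :
  (m * k < n)%N -> alg_deg (@theta n m k) = ((m - 1) * k + 1)%N.
Proof.
move=> mk_lt_n; rewrite /alg_deg addn1.
under eq_bigr => i _ do rewrite (anf_deg_theta n_gt0 m_gt0 mk_lt_n).
apply/eqP; rewrite eqn_leq; apply/andP; split; first exact/bigmax_leqP.
exact: (leq_bigmax_cond (Ordinal n_gt0)).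
Qed.

Lemma theta_delta_ordmod (i : 'I_n) j k : (m * j < n)%N -> (m * k < n)%N ->
  theta m j (delta_mx ord0 (ordmod n_gt0 (i + m * k))) ord0 i = (j == k)%:R.
Proof.
move=> mj_lt_n mk_lt_n; rewrite theta_coordE // pattern_delta; last first.
  exact: theta_head_notin_guard.
congr ((nat_of_bool _)%:R).
apply/idP/idP => [/eqP/ordmod_addl_inj|/eqP -> //].
by move=> /(_ mj_lt_n mk_lt_n) /eqP; rewrite eqn_pmul2l.
Qed.

Variables (l : nat) (ml_lt_n : (m * l < n)%N).

Lemma theta_lin_indep (a : 'I_l.+1 -> F2) :
  (forall x : BV n, \sum_(k < l.+1) a k *: theta m k x = 0) -> forall k, a k = 0.
Proof.
have mj_lt_n (j : 'I_l.+1) : (m * j < n)%N.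
  by apply: leq_ltn_trans ml_lt_n; rewrite leq_mul2l -ltnS ltn_ord orbT.
move=> a_rel k; pose i0 := Ordinal n_gt0.
have /(congr1 (fun y : BV n => y ord0 i0)) :=
  a_rel (delta_mx ord0 (ordmod n_gt0 (i0 + m * k))).
rewrite summxE mxE (bigD1 k) // big1 => [|j jk].
  by rewrite mxE theta_delta_ordmod // eqxx mulr1 Monoid.mulm1.
rewrite mxE theta_delta_ordmod //.
by move: jk; rewrite -val_eqE => /negbTE ->; rewrite mulr0.
Qed.

Lemma dim_span_theta :
  \dim <<[seq [ffun x : BV n => theta m k x] | k <- iota 0 l.+1]>> = l.+1.
Proof.
set X := [seq _ | k <- _].
have sizeX : size X = l.+1 by rewrite size_map size_iota.
suff /eqP : free X by rewrite sizeX.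
apply/(freeP (X := in_tuple X)); change (forall c : 'I_(size X) -> F2,
  \sum_(i < size X) c i *: X`_i = 0 -> forall i, c i = 0).
rewrite sizeX => c c_rel; apply: theta_lin_indep => x.
have /(congr1 (fun g : {ffun BV n -> BV n} => g x)) := c_rel.
rewrite sum_ffunE ffunE => rel_x; rewrite -[RHS]rel_x; apply: eq_bigr => k _.
by rewrite ffunE /X (nth_map 0%N) ?size_iota // nth_iota // ffunE.
Qed.

End ThetaFamily.

Lemma muln_divn_lt (d n : nat) : ~~ (d %| n)%N -> (d * (n %/ d) < n)%N.
Proof. by rewrite mulnC ltn_neqAle leq_divM andbT dvdn_eq. Qed.

Theorem lemma2 (n m : nat) (hn : (1 <= n)%N) (hm : (2 <= m)%N)
  (hnd : ~~ (m %| n)%N) :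
  let l := (n %/ m)%N in
  [/\ (forall k : nat, (1 <= k <= l)%N ->
         alg_deg (@theta n m k) = ((m - 1) * k + 1)%N),
      (forall a : nat -> F2,
         (forall x : BV n, \sum_(k < l.+1) a k *: @theta n m k x = 0) ->
         forall k : nat, (k <= l)%N -> a k = 0)
    & \dim (Theta n m) = l.+1].
Proof.
move=> l; have m_gt0 : (0 < m)%N by exact: ltnW.
have ml_lt_n : (m * l < n)%N by exact: muln_divn_lt.
split.
- move=> k /andP[_ k_le_l]; apply: alg_deg_theta => //.
  by apply: leq_ltn_trans ml_lt_n; rewrite leq_mul2l k_le_l orbT.
- move=> a a_rel k k_le_l.
  exact: (theta_lin_indep hn m_gt0 ml_lt_n (a := fun k : 'I_l.+1 => a k) a_rel
    (Ordinal (k_le_l : (k < l.+1)%N))).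
- exact: dim_span_theta.
Qed.
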